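(* Each of the following polynomials is a $\mathbb{Z}_2$-graded polynomial identity of $E_{0^*}\otimes E_0$: (1) $[y_1,y_2,y_3]$ and $[y_1,y_2,z_3]$; (2) $[y_1,z_2,y_3]$; (3) $[y_1,z_2]\circ z_3$; (4) $[z_1\circ z_2,z_3]$; (5) $(z_1\circ z_2)(z_3\circ z_4)-(z_1\circ z_3)(z_2\circ z_4)$; (6) $[x_1,y_2][y_3,x_4]+[x_1,y_3][y_2,x_4]$, for every choice of $x_1\in\{y_1,z_1\}$ and $x_4\in\{y_4,z_4\}$; (7) $[y_1,z_2](z_3\circ z_4)-[y_1,z_3](z_2\circ z_4)$. Equivalently, the $T_2$-ideal $I$ generated by these polynomials is contained in $T_2(E_{0^*}\otimes E_0)$.
   Context: $\mathbb{K}$ is an infinite field of characteristic different from $2$. $E$ is the Grassmann algebra of a vector space with countable basis $e_1,e_2,\dots$ (generated by the $e_i$ with $e_ie_j=-e_je_i$), with canonical $\mathbb{Z}_2$-grading $E=E^{(0)}\oplus E^{(1)}$ (even/odd length monomials). $A=E\otimes E$ has the $\mathbb{Z}_2\times\mathbb{Z}_2$-grading $A_{(a,b)}=E^{(a)}\otimes E^{(b)}$. $E_{0^*}\otimes E_0$ denotes $A$ with the $\mathbb{Z}_2$-grading $A_0=A_{(0,0)}\oplus A_{(1,0)}$, $A_1=A_{(0,1)}\oplus A_{(1,1)}$. $\mathbb{K}\langle Y\cup Z\rangle$ is the free associative algebra on disjoint countable sets $Y=\{y_1,y_2,\dots\}$ (variables of degree $0$) and $Z=\{z_1,z_2,\dots\}$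 (variables of degree $1$). A polynomial $f(y_1,\dots,y_m,z_1,\dots,z_n)$ is a $\mathbb{Z}_2$-graded identity of a $\mathbb{Z}_2$-graded algebra $A=A_0\oplus A_1$ if $f(a_1,\dots,a_m,b_1,\dots,b_n)=0$ for all $a_i\in A_0$, $b_i\in A_1$; $T_2(A)$ is the set of these. A $T_2$-ideal is an ideal of $\mathbb{K}\langle Y\cup Z\rangle$ stable under all graded endomorphisms (those sending each $y_i$ to a polynomial of degree $0$ and each $z_i$ to a polynomial of degree $1$). Notation: $[a,b]=ab-ba$, $[a_1,\dots,a_n]=[[a_1,\dots,a_{n-1}],a_n]$, $a\circ b=ab+ba$. *)

(* Concrete model of A = E (x) E over a field K, where E is the
   Grassmann algebra on generators e_0, e_1, e_2, ... (countable basis).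
   A basis of E (x) E is { e_S (x) e_T } with S, T finite sets of indices,
   represented as strictly increasing lists of naturals.  An element of A is
   given by its coefficient function on such pairs (S, T). *)
From HB Require Import structures.
From mathcomp Require Import all_boot all_order all_algebra.
Set Implicit Arguments. Unset Strict Implicit. Unset Printing Implicit Defensive.
Import GRing.Theory.
Local Open Scope ring_scope.

Definition mono := (seq nat * seq nat)%type.

Definition canon (s : seq nat) : bool := sorted ltn s.
Definition canonm (m : mono) : bool := canon m.1 && canon m.2.

(* number of inversions i in s1, j in s2 with j < i : e_{s1} e_{s2} = (-1)^inv e_{s1 u s2} *)
Definition inv_count (s1 s2 : seq nat) : nat :=
  (\sum_(i <- s1) count (fun j => j < i) s2)%N.

Section GrassTensor.
Variable K : fieldType.

Definition A := mono -> K.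

Definition gsign (s1 s2 : seq nat) : K := (-1) ^+ inv_count s1 s2.

Definition azero : A := fun _ => 0.
Definition aadd (a b : A) : A := fun m => a m + b m.
Definition aopp (a : A) : A := fun m => - a m.
Definition asub (a b : A) : A := aadd a (aopp b).

(* product in E (x) E (ordinary tensor product of algebras):
   (e_S1 (x) e_T1)(e_S2 (x) e_T2) = (e_S1 e_S2) (x) (e_T1 e_T2).
   The coefficient at canonical (S,T) sums over all splittings S = S1 u S2,
   T = T1 u T2 (given by bit masks). *)
Definition amul (a b : A) : A := fun m =>
  if canonm m then
    \sum_(u : (size m.1).-tuple bool) \sum_(v : (size m.2).-tuple bool)
      gsign (mask u m.1) (mask (map negb u) m.1) *
      gsign (mask v m.2) (mask (map negb v) m.2) *
      a (mask u m.1, mask v m.2) * b (mask (map negb u) m.1, mask (map negb v) m.2)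
  else 0.

Definition acomm (a b : A) : A := asub (amul a b) (amul b a).
Definition ajord (a b : A) : A := aadd (amul a b) (amul b a).
Definition acomm3 (a b c : A) : A := acomm (acomm a b) c.

Definition is_elt (a : A) : Prop :=
  (forall m, a m != 0 -> canonm m) /\
  exists N : nat, forall m, a m != 0 -> all (fun i => (i < N)%N) (m.1 ++ m.2).

(* Z2-grading of E_{0*} (x) E_0 : A_0 = E^(0)(x)E^(0) + E^(1)(x)E^(0),
   A_1 = E^(0)(x)E^(1) + E^(1)(x)E^(1); i.e. the degree is the parity of the
   second tensor factor.  homog d a  <->  a \in A_d. *)
Definition homog (d : bool) (a : A) : Prop :=
  is_elt a /\ forall m, a m != 0 -> odd (size m.2) = d.

Definition is_zero (a : A) : Prop := forall m, a m = 0.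

End GrassTensor.

From HB Require Import structures.
From mathcomp Require Import all_boot all_order all_algebra.
From mathcomp Require Import ring.
From Stdlib Require Import FunctionalExtensionality.
Import GRing.Theory.
Local Open Scope ring_scope.
Set Implicit Arguments. Unset Strict Implicit.

(* On bihomogeneous elements, x in E^(i) (x) E^(j) and y in E^(k) (x) E^(l),
   the Grassmann relations in both tensor factors give the supercommutation rule
   x y = (-1)^(ik + jl) y x.  An element of degree d for the grading of
   E_{0*} (x) E_0 is the sum of its components in E^(0) (x) E^(d) and
   E^(1) (x) E^(d), and every polynomial in the list is multilinear, so it is
   enough to evaluate it on bihomogeneous arguments.  There each monomial can
   be reordered to a fixed order at the cost of a sign, and in every one of the
   finitely many bidegree patterns the signed terms cancel. *)

Lemma big_tuple_cons (R : nmodType) n (T : finType) (G : n.+1.-tuple T -> R) :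
  \sum_(t : n.+1.-tuple T) G t = \sum_(x : T) \sum_(t : n.-tuple T) G [tuple of x :: t].
Proof.
rewrite pair_big /= (reindex (fun p : T * n.-tuple T => [tuple of p.1 :: p.2])) //=.
exists (fun t => (thead t, [tuple of behead t])) => [[x t] _|t _] /=.
  by congr pair; apply: val_inj.
by rewrite [RHS]tuple_eta; apply: val_inj.
Qed.

(* The splittings of [s] into two complementary subsequences, one per bit mask
   as in [amul] (hence with multiplicities). *)
Fixpoint splits (s : seq nat) : seq (seq nat * seq nat) :=
  if s is x :: s' then
    [seq (x :: pq.1, pq.2) | pq <- splits s'] ++ [seq (pq.1, x :: pq.2) | pq <- splits s']
  else [:: ([::], [::])].

Lemma mem_splits_perm s pq : pq \in splits s -> perm_eq s (pq.1 ++ pq.2).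
Proof.
elim: s pq => [|x s IH] [p q] /=; first by rewrite inE => /eqP[-> ->].
rewrite mem_cat => /orP[] /mapP[[p' q'] /IH /= H [-> ->]] /=; first by rewrite perm_cons.
by rewrite perm_sym -(cat1s x q') perm_catCA /= perm_cons perm_sym.
Qed.

Lemma mem_splits_subseq s pq : pq \in splits s -> subseq pq.1 s && subseq pq.2 s.
Proof.
elim: s pq => [|x s IH] [p q] /=; first by rewrite inE => /eqP[-> ->].
have sub_cons t : subseq t s -> subseq t (x :: s) by move/subseq_trans; apply; exact: subseq_cons.
rewrite mem_cat => /orP[] /mapP[[p' q'] /IH /andP[H1 H2] [-> ->]]; apply/andP; split.
- by rewrite /= eqxx.
- exact: sub_cons.
- exact: sub_cons.
- by rewrite /= eqxx.
Qed.

Lemma canon_splits s pq : canon s -> pq \in splits s -> canon pq.1 && canon pq.2.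
Proof.
move=> cs /mem_splits_subseq /andP[h1 h2].
by rewrite /canon (subseq_sorted ltn_trans h1 cs) (subseq_sorted ltn_trans h2 cs).
Qed.

Section SumSplits.
Variable R : nmodType.

Lemma sum_mask_splits (s : seq nat) (F : seq nat -> seq nat -> R) :
  \sum_(u : (size s).-tuple bool) F (mask u s) (mask (map negb u) s)
  = \sum_(pq <- splits s) F pq.1 pq.2.
Proof.
elim: s F => [|x s IH] F.
  rewrite big_seq1 /= (big_pred1 [tuple]) // => t /=.
  by symmetry; apply/eqP; exact: tuple0.
rewrite /= (big_tuple_cons (fun u => F (mask u (x :: s)) (mask (map negb u) (x :: s)))).
rewrite big_bool /= big_cat /= !big_map.
by rewrite (IH (fun p q => F (x :: p) q)) (IH (fun p q => F p (x :: q))).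
Qed.

Lemma sum_splits_assoc (s : seq nat) (G : seq nat -> seq nat -> seq nat -> R) :
  \sum_(tr <- splits s) \sum_(pq <- splits tr.1) G pq.1 pq.2 tr.2
  = \sum_(pt <- splits s) \sum_(qr <- splits pt.2) G pt.1 qr.1 qr.2.
Proof.
elim: s G => [|x s IH] G; first by rewrite !big_cons !big_nil.
rewrite /= !big_cat /= !big_map /=.
under eq_bigr do rewrite big_cat /= !big_map.
under [X in _ = _ + X]eq_bigr do rewrite big_cat !big_map.
rewrite big_split [X in _ = _ + X]big_split /=.
rewrite -(IH (fun p q r => G (x :: p) q r)) -(IH (fun p q r => G p (x :: q) r)).
by rewrite -(IH (fun p q r => G p q (x :: r))) addrA.
Qed.

Lemma sum_splits_swap (s : seq nat) (F : seq nat -> seq nat -> R) :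
  \sum_(pq <- splits s) F pq.1 pq.2 = \sum_(pq <- splits s) F pq.2 pq.1.
Proof.
elim: s F => [|x s IH] F; first by rewrite !big_seq1.
rewrite /= !big_cat !big_map /=.
by rewrite (IH (fun p q => F (x :: p) q)) (IH (fun p q => F p (x :: q))) addrC.
Qed.

End SumSplits.

Lemma inv_count_catl p q r : inv_count (p ++ q) r = (inv_count p r + inv_count q r)%N.
Proof. by rewrite /inv_count big_cat. Qed.

Lemma inv_count_catr p q r : inv_count p (q ++ r) = (inv_count p q + inv_count p r)%N.
Proof. by rewrite /inv_count -big_split /=; apply: eq_bigr => i _; rewrite count_cat. Qed.

Lemma inv_count_perml p p' r : perm_eq p p' -> inv_count p r = inv_count p' r.
Proof. by move=> H; rewrite /inv_count (perm_big _ H). Qed.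

Lemma inv_count_permr p r r' : perm_eq r r' -> inv_count p r = inv_count p r'.
Proof. by move=> /permP H; rewrite /inv_count; apply: eq_bigr => i _; rewrite H. Qed.

Lemma inv_count_swap (p q : seq nat) : ~~ has (mem p) q ->
  (inv_count p q + inv_count q p = size p * size q)%N.
Proof.
move=> dpq.
have -> : inv_count q p = (\sum_(i <- p) count (fun j => i < j) q)%N.
  rewrite /inv_count; under eq_bigr do rewrite -sumn_count sumnE big_map.
  by rewrite exchange_big /=; apply: eq_bigr => i _; rewrite -sumn_count sumnE big_map.
rewrite /inv_count -big_split /= big_seq (eq_bigr (fun _ => size q)); last first.
  move=> i ip; have := contraL (hasPn dpq i) ip.
  elim: q {dpq} => //= j q IH; rewrite inE negb_or => /andP[ne nq].
  by rewrite addnACA IH //; case: ltngtP ne => //; rewrite eq_sym => ->.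
by rewrite -big_seq big_const_seq count_predT iter_addn_0 mulnC.
Qed.

Section GrassmannTensor.
Variable K : fieldType.
Local Notation g := (gsign K).
Local Notation A := (A K).

Lemma gsign_catl p q r : g (p ++ q) r = g p r * g q r.
Proof. by rewrite /gsign inv_count_catl exprD. Qed.

Lemma gsign_catr p q r : g p (q ++ r) = g p q * g p r.
Proof. by rewrite /gsign inv_count_catr exprD. Qed.

Lemma gsign_perml p p' r : perm_eq p p' -> g p r = g p' r.
Proof. by move=> H; rewrite /gsign (inv_count_perml _ H). Qed.

Lemma gsign_permr p r r' : perm_eq r r' -> g p r = g p r'.
Proof. by move=> H; rewrite /gsign (inv_count_permr _ H). Qed.

Lemma gsign_sqr p q : g p q * g p q = 1.
Proof. by rewrite /gsign -exprD -signr_odd addnn odd_double. Qed.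

(* Since [e_p e_q = gsign p q e_s] whenever [p ++ q] is a permutation of [s],
   [conv s F] is the coefficient of [e_s] in a product in [E] whose factors
   contribute [F p q]. *)
Definition conv (s : seq nat) (F : seq nat -> seq nat -> K) : K :=
  \sum_(pq <- splits s) g pq.1 pq.2 * F pq.1 pq.2.

Lemma eq_conv_in s F G : (forall p q, (p, q) \in splits s -> F p q = G p q) ->
  conv s F = conv s G.
Proof.
by move=> H; rewrite /conv big_seq [RHS]big_seq; apply: eq_bigr => -[p q] /H /= ->.
Qed.

Lemma eq_conv s F G : (forall p q, F p q = G p q) -> conv s F = conv s G.
Proof. by move=> H; apply: eq_conv_in => p q _; apply: H. Qed.

Lemma mulr_convl s F c : conv s F * c = conv s (fun p q => F p q * c).
Proof. by rewrite /conv mulr_suml; apply: eq_bigr => i _; rewrite mulrA. Qed.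

Lemma mulr_convr s F c : c * conv s F = conv s (fun p q => c * F p q).
Proof. by rewrite /conv mulr_sumr; apply: eq_bigr => i _; rewrite mulrCA. Qed.

Lemma convD s F G : conv s (fun p q => F p q + G p q) = conv s F + conv s G.
Proof. by rewrite /conv -big_split; apply: eq_bigr => i _; rewrite mulrDr. Qed.

Lemma exchange_conv s t (X : seq nat -> seq nat -> seq nat -> seq nat -> K) :
  conv s (fun p q => conv t (X p q)) = conv t (fun p' q' => conv s (fun p q => X p q p' q')).
Proof.
rewrite /conv; under eq_bigr do rewrite mulr_sumr.
rewrite exchange_big /=; apply: eq_bigr => i _; rewrite mulr_sumr.
by apply: eq_bigr => j _; rewrite mulrCA.
Qed.

(* Associativity of the Grassmann product, at the level of coefficients. *)
Lemma conv_assoc s (H : seq nat -> seq nat -> seq nat -> K) :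
  conv s (fun t r => conv t (fun p q => H p q r)) =
  conv s (fun p t => conv t (fun q r => H p q r)).
Proof.
rewrite /conv.
transitivity (\sum_(tr <- splits s) \sum_(pq <- splits tr.1)
   (g pq.1 pq.2 * g pq.1 tr.2 * g pq.2 tr.2 * H pq.1 pq.2 tr.2)).
  apply: eq_bigr => -[t r] _ /=; rewrite mulr_sumr big_seq [RHS]big_seq.
  apply: eq_bigr => -[p q] /mem_splits_perm /= Ht.
  by rewrite (gsign_perml _ Ht) gsign_catl; ring.
rewrite (sum_splits_assoc s (fun p q r => g p q * g p r * g q r * H p q r)).
apply: eq_bigr => -[p t] _ /=; rewrite mulr_sumr big_seq [RHS]big_seq.
apply: eq_bigr => -[q r] /mem_splits_perm /= Ht.
by rewrite (gsign_permr _ Ht) gsign_catr; ring.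
Qed.

Lemma conv_swap s F : uniq s ->
  conv s F = conv s (fun p q => (-1) ^+ (size p * size q) * F q p).
Proof.
move=> us; rewrite /conv (sum_splits_swap _ (fun p q => g p q * F p q)).
rewrite big_seq [RHS]big_seq; apply: eq_bigr => -[p q] /mem_splits_perm /= Hp.
have dpq : ~~ has (mem p) q by move: us; rewrite (perm_uniq Hp) cat_uniq => /and3P[].
rewrite -(inv_count_swap dpq) exprD -!/(gsign K _ _).
by rewrite !mulrA gsign_sqr mul1r.
Qed.

Lemma amulE (a b : A) m : amul a b m =
  if canonm m then conv m.1 (fun p q => conv m.2 (fun p' q' => a (p, p') * b (q, q')))
  else 0.
Proof.
rewrite /amul; case: ifP => // _.
rewrite (sum_mask_splits m.1 (fun p q => \sum_(v : (size m.2).-tuple bool)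
   g p q * g (mask v m.2) (mask (map negb v) m.2) * a (p, mask v m.2)
   * b (q, mask (map negb v) m.2))).
apply: eq_bigr => pq _; rewrite mulr_sumr.
rewrite (sum_mask_splits m.2 (fun p' q' => g pq.1 pq.2 * g p' q' * a (pq.1, p') * b (pq.2, q'))).
by apply: eq_bigr => pq' _; ring.
Qed.

Definition ascale (c : K) (a : A) : A := fun m => c * a m.

Lemma aoppE (a : A) : aopp a = ascale (-1) a.
Proof. by apply: functional_extensionality => m; rewrite /aopp /ascale mulN1r. Qed.

Lemma amulDl (a b c : A) : amul (aadd a b) c = aadd (amul a c) (amul b c).
Proof.
apply: functional_extensionality => m; rewrite /aadd !amulE.
case: ifP => _; last by rewrite addr0.
rewrite -convD; apply: eq_conv => p q; rewrite -convD; apply: eq_conv => p' q'.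
by rewrite mulrDl.
Qed.

Lemma amulDr (a b c : A) : amul a (aadd b c) = aadd (amul a b) (amul a c).
Proof.
apply: functional_extensionality => m; rewrite /aadd !amulE.
case: ifP => _; last by rewrite addr0.
rewrite -convD; apply: eq_conv => p q; rewrite -convD; apply: eq_conv => p' q'.
by rewrite mulrDr.
Qed.

Lemma amulZl k (a b : A) : amul (ascale k a) b = ascale k (amul a b).
Proof.
apply: functional_extensionality => m; rewrite /ascale !amulE.
case: ifP => _; last by rewrite mulr0.
rewrite mulr_convr; apply: eq_conv => p q; rewrite mulr_convr; apply: eq_conv => p' q'.
by rewrite mulrA.
Qed.

Lemma amulZr k (a b : A) : amul a (ascale k b) = ascale k (amul a b).
Proof.
apply: functional_extensionality => m; rewrite /ascale !amulE.
case: ifP => _; last by rewrite mulr0.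
rewrite mulr_convr; apply: eq_conv => p q; rewrite mulr_convr; apply: eq_conv => p' q'.
by rewrite mulrCA.
Qed.

Lemma amulA (a b c : A) : amul (amul a b) c = amul a (amul b c).
Proof.
apply: functional_extensionality => m; rewrite !amulE; case: ifP => // /andP[c1 c2].
pose abc p q r p' q' r' := a (p, p') * b (q, q') * c (r, r').
transitivity (conv m.1 (fun t r => conv m.2 (fun t' r' =>
   conv t (fun p q => conv t' (fun p' q' => abc p q r p' q' r'))))).
  apply: eq_conv_in => t r Htr; apply: eq_conv_in => t' r' Htr'.
  have /andP[ct _] := canon_splits c1 Htr; have /andP[ct' _] := canon_splits c2 Htr'.
  rewrite amulE /canonm /= ct ct' /= mulr_convl; apply: eq_conv => p q.
  by rewrite mulr_convl.
transitivity (conv m.1 (fun p t => conv m.2 (fun p' t' =>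
   conv t (fun q r => conv t' (fun q' r' => abc p q r p' q' r'))))); last first.
  apply: eq_conv_in => p t Hpt; apply: eq_conv_in => p' t' Hpt'.
  have /andP[_ ct] := canon_splits c1 Hpt; have /andP[_ ct'] := canon_splits c2 Hpt'.
  rewrite amulE /canonm /= ct ct' /= mulr_convr; apply: eq_conv => q r.
  by rewrite mulr_convr; apply: eq_conv => q' r'; rewrite mulrA.
under eq_conv do rewrite exchange_conv.
rewrite (conv_assoc m.1 (fun p q r => conv m.2 (fun t' r' =>
   conv t' (fun p' q' => abc p q r p' q' r')))).
apply: eq_conv => p t; rewrite [RHS]exchange_conv; apply: eq_conv => q r.
exact: (conv_assoc m.2 (abc p q r)).
Qed.

Definition bihomog (i j : bool) (a : A) : Prop :=
  forall m, a m != 0 -> odd (size m.1) = i /\ odd (size m.2) = j.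

Lemma amulC_bihomog i j k l (a b : A) : bihomog i j a -> bihomog k l b ->
  amul a b = ascale ((-1) ^+ ((i && k) (+) (j && l))) (amul b a).
Proof.
move=> ha hb; apply: functional_extensionality => m; rewrite /ascale !amulE.
case: ifP => [/andP[c1 c2]|_]; last by rewrite mulr0.
have u1 : uniq m.1 by apply: sorted_uniq c1; [exact: ltn_trans|exact: ltnn].
have u2 : uniq m.2 by apply: sorted_uniq c2; [exact: ltn_trans|exact: ltnn].
rewrite (conv_swap _ u1) mulr_convr; apply: eq_conv => p q.
rewrite (conv_swap _ u2) !mulr_convr; apply: eq_conv => p' q'.
have [->|na] := eqVneq (a (q, q')) 0; first by rewrite !(mulr0, mul0r).
have [->|nb] := eqVneq (b (p, p')) 0; first by rewrite !(mulr0, mul0r).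
have [/= hi hj] := ha _ na; have [/= hk hl] := hb _ nb.
rewrite -[(-1) ^+ (size p * size q)]signr_odd -[(-1) ^+ (size p' * size q')]signr_odd.
rewrite !oddM hi hj hk hl signr_addb (andbC k i) (andbC l j).
ring.
Qed.

Lemma amulCA_bihomog i j k l (a b c : A) : bihomog i j a -> bihomog k l b ->
  amul a (amul b c) = ascale ((-1) ^+ ((i && k) (+) (j && l))) (amul b (amul a c)).
Proof. by move=> ha hb; rewrite -amulA (amulC_bihomog ha hb) amulZl amulA. Qed.

Definition apart (i : bool) (a : A) : A :=
  fun m => if odd (size m.1) == i then a m else 0.

Lemma apart_decomp (a : A) : a = aadd (apart false a) (apart true a).
Proof.
apply: functional_extensionality => m; rewrite /aadd /apart.
by case: (odd (size m.1)); rewrite ?addr0 ?add0r.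
Qed.

Lemma apart_bihomog d i (a : A) : homog d a -> bihomog i d (apart i a).
Proof.
move=> [_ h] m; rewrite /apart.
by case: (odd (size m.1) =P i) => [Hi Hm|_]; [split; last exact: h | rewrite eqxx].
Qed.

Lemma homog_zero_from_bihomog d (F : A -> A) :
    (forall a b, F (aadd a b) = aadd (F a) (F b)) ->
    (forall i a, bihomog i d a -> is_zero (F a)) ->
  forall a, homog d a -> is_zero (F a).
Proof.
move=> Fadd Fbi a ha m; rewrite (apart_decomp a) Fadd /aadd.
by rewrite (Fbi _ _ (apart_bihomog (i:=false) ha)) (Fbi _ _ (apart_bihomog (i:=true) ha)) addr0.
Qed.

End GrassmannTensor.

(* Reduction to bihomogeneous arguments, then reordering of every monomial into
   the order of the hypotheses passed to [sort_pair], one signed swap at a time;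
   what is left is a sign computation for each choice of bidegrees. *)
Ltac expand_amul :=
  rewrite /acomm3 /acomm /ajord /asub ?aoppE ?(amulDl, amulDr, amulZl, amulZr, amulA).

Ltac additive_in_arg :=
  let a := fresh "a" in let b := fresh "b" in let m := fresh "m" in
  move=> a b; apply: functional_extensionality => m; expand_amul;
  rewrite /aadd /ascale; ring.

Ltac split_bihomog x hx i :=
  move: x hx; apply: homog_zero_from_bihomog; [additive_in_arg | move=> i x hx].

Ltac sort_pair hx hy := rewrite ?(amulCA_bihomog _ hy hx) ?(amulC_bihomog hy hx).

Ltac normalize_monomials sort :=
  expand_amul; do ![progress (rewrite ?amulA ?amulZl ?amulZr; sort)];
  let m := fresh "m" in move=> m; rewrite /aadd /ascale.

Ltac close_signs := rewrite /= ?expr0 ?expr1; ring.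

Section Identities.
Variable K : fieldType.
Local Notation A := (A K).

Lemma acomm3_yyx_zero d (y1 y2 x3 : A) :
  homog false y1 -> homog false y2 -> homog d x3 -> is_zero (acomm3 y1 y2 x3).
Proof.
move=> h1 h2 h3.
split_bihomog y1 h1 i1; split_bihomog y2 h2 i2; split_bihomog x3 h3 i3.
normalize_monomials ltac:(sort_pair h1 h2; sort_pair h1 h3; sort_pair h2 h3).
by case: i1 i2 i3 d {h1 h2 h3} => [] [] [] []; close_signs.
Qed.

Lemma acomm3_yzy_zero (y1 z2 y3 : A) :
  homog false y1 -> homog true z2 -> homog false y3 -> is_zero (acomm3 y1 z2 y3).
Proof.
move=> h1 h2 h3.
split_bihomog y1 h1 i1; split_bihomog z2 h2 i2; split_bihomog y3 h3 i3.
normalize_monomials ltac:(sort_pair h1 h2; sort_pair h1 h3; sort_pair h2 h3).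
by case: i1 i2 i3 {h1 h2 h3} => [] [] []; close_signs.
Qed.

Lemma ajord_acomm_yzz_zero (y1 z2 z3 : A) :
  homog false y1 -> homog true z2 -> homog true z3 -> is_zero (ajord (acomm y1 z2) z3).
Proof.
move=> h1 h2 h3.
split_bihomog y1 h1 i1; split_bihomog z2 h2 i2; split_bihomog z3 h3 i3.
normalize_monomials ltac:(sort_pair h1 h2; sort_pair h1 h3; sort_pair h2 h3).
by case: i1 i2 i3 {h1 h2 h3} => [] [] []; close_signs.
Qed.

Lemma acomm_ajord_zzz_zero (z1 z2 z3 : A) :
  homog true z1 -> homog true z2 -> homog true z3 -> is_zero (acomm (ajord z1 z2) z3).
Proof.
move=> h1 h2 h3.
split_bihomog z1 h1 i1; split_bihomog z2 h2 i2; split_bihomog z3 h3 i3.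
normalize_monomials ltac:(sort_pair h1 h2; sort_pair h1 h3; sort_pair h2 h3).
by case: i1 i2 i3 {h1 h2 h3} => [] [] []; close_signs.
Qed.

Ltac sort4 h1 h2 h3 h4 :=
  sort_pair h1 h2; sort_pair h1 h3; sort_pair h1 h4;
  sort_pair h2 h3; sort_pair h2 h4; sort_pair h3 h4.

Lemma mul_ajord_zzzz_zero (z1 z2 z3 z4 : A) :
    homog true z1 -> homog true z2 -> homog true z3 -> homog true z4 ->
  is_zero (asub (amul (ajord z1 z2) (ajord z3 z4)) (amul (ajord z1 z3) (ajord z2 z4))).
Proof.
move=> h1 h2 h3 h4.
split_bihomog z1 h1 i1; split_bihomog z2 h2 i2.
split_bihomog z3 h3 i3; split_bihomog z4 h4 i4.
normalize_monomials ltac:(sort4 h1 h2 h3 h4).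
by case: i1 i2 i3 i4 {h1 h2 h3 h4} => [] [] [] []; close_signs.
Qed.

Lemma mul_acomm_xyyx_zero d1 d4 (x1 y2 y3 x4 : A) :
    homog d1 x1 -> homog false y2 -> homog false y3 -> homog d4 x4 ->
  is_zero (aadd (amul (acomm x1 y2) (acomm y3 x4)) (amul (acomm x1 y3) (acomm y2 x4))).
Proof.
move=> h1 h2 h3 h4.
split_bihomog x1 h1 i1; split_bihomog y2 h2 i2.
split_bihomog y3 h3 i3; split_bihomog x4 h4 i4.
normalize_monomials ltac:(sort4 h1 h2 h3 h4).
by case: i1 i2 i3 i4 d1 d4 {h1 h2 h3 h4} => [] [] [] [] [] []; close_signs.
Qed.

Lemma mul_acomm_ajord_yzzz_zero (y1 z2 z3 z4 : A) :
    homog false y1 -> homog true z2 -> homog true z3 -> homog true z4 ->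
  is_zero (asub (amul (acomm y1 z2) (ajord z3 z4)) (amul (acomm y1 z3) (ajord z2 z4))).
Proof.
move=> h1 h2 h3 h4.
split_bihomog y1 h1 i1; split_bihomog z2 h2 i2.
split_bihomog z3 h3 i3; split_bihomog z4 h4 i4.
normalize_monomials ltac:(sort4 h1 h2 h3 h4).
by case: i1 i2 i3 i4 {h1 h2 h3 h4} => [] [] [] []; close_signs.
Qed.

End Identities.

Unset Implicit Arguments.

Theorem lemma6 (K : fieldType)
  (K_infinite : forall s : seq K, exists x : K, x \notin s)
  (K_char : ~~ (2%N \in [pchar K])) :
  (* (1) [y1,y2,y3] and [y1,y2,z3] *)
  (forall y1 y2 y3 : A K, homog false y1 -> homog false y2 -> homog false y3 ->
     is_zero (acomm3 y1 y2 y3)) /\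
  (forall (y1 y2 : A K) (z3 : A K), homog false y1 -> homog false y2 -> homog true z3 ->
     is_zero (acomm3 y1 y2 z3)) /\
  (* (2) [y1,z2,y3] *)
  (forall (y1 z2 y3 : A K), homog false y1 -> homog true z2 -> homog false y3 ->
     is_zero (acomm3 y1 z2 y3)) /\
  (* (3) [y1,z2] o z3 *)
  (forall (y1 z2 z3 : A K), homog false y1 -> homog true z2 -> homog true z3 ->
     is_zero (ajord (acomm y1 z2) z3)) /\
  (* (4) [z1 o z2, z3] *)
  (forall (z1 z2 z3 : A K), homog true z1 -> homog true z2 -> homog true z3 ->
     is_zero (acomm (ajord z1 z2) z3)) /\
  (* (5) (z1 o z2)(z3 o z4) - (z1 o z3)(z2 o z4) *)
  (forall (z1 z2 z3 z4 : A K), homog true z1 -> homog true z2 -> homog true z3 ->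
     homog true z4 ->
     is_zero (asub (amul (ajord z1 z2) (ajord z3 z4))
                   (amul (ajord z1 z3) (ajord z2 z4)))) /\
  (* (6) [x1,y2][y3,x4] + [x1,y3][y2,x4], x1 in {y1,z1}, x4 in {y4,z4} *)
  (forall (d1 d4 : bool) (x1 y2 y3 x4 : A K), homog d1 x1 -> homog false y2 ->
     homog false y3 -> homog d4 x4 ->
     is_zero (aadd (amul (acomm x1 y2) (acomm y3 x4))
                   (amul (acomm x1 y3) (acomm y2 x4)))) /\
  (* (7) [y1,z2](z3 o z4) - [y1,z3](z2 o z4) *)
  (forall (y1 z2 z3 z4 : A K), homog false y1 -> homog true z2 -> homog true z3 ->
     homog true z4 ->
     is_zero (asub (amul (acomm y1 z2) (ajord z3 z4))
                   (amul (acomm y1 z3) (ajord z2 z4)))).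
Proof.
split; first by move=> y1 y2 y3; apply: acomm3_yyx_zero.
split; first by move=> y1 y2 z3; apply: acomm3_yyx_zero.
split; first exact: acomm3_yzy_zero.
split; first exact: ajord_acomm_yzz_zero.
split; first exact: acomm_ajord_zzz_zero.
split; first exact: mul_ajord_zzzz_zero.
split; first exact: mul_acomm_xyyx_zero.
exact: mul_acomm_ajord_yzzz_zero.
Qed.
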